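(* In the three-point self-training loop with $\Gamma=\infty$, fix a period $t$ with symmetric prior $\pi_t(-\bar\theta)=\pi_t(\bar\theta)=(1-p_t)/2$, $\pi_t(0)=p_t\in[0,1)$, and suppose the users use signals $\sigma_t(0)=\infty$ and $\sigma_t(-\bar\theta)=\sigma_t(\bar\theta)=\sigma\in(0,\infty)$ (held fixed). Then the next-period mass at zero $p_{t+1}=\pi_{t+1}(0)=\mathbb P(\theta^\star_t=0)$ is (1) strictly increasing in $p_t$, and (2) strictly increasing in $\sigma$. Equivalently, since $\mathrm{Var}(\theta^\star_t)=\bar\theta^2(1-p_{t+1})$ and $\mathrm{Var}$ of the prior $\pi_t$ is $\bar\theta^2(1-p_t)$, the output variance at period $t$ is strictly increasing in the variance of the period-$t$ prior and strictly decreasing in $\sigma$.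
   Context: Three-point self-training loop. Fix $\bar\theta>0$, $p_0\in(0,1)$, $\gamma>0$, $\Gamma\in(0,\infty]$. Population preferences $\theta$ take values in $\Theta=\{-\bar\theta,0,\bar\theta\}$ with $\pi_T(-\bar\theta)=\pi_T(\bar\theta)=(1-p_0)/2$, $\pi_T(0)=p_0$. Set $\pi_0=\pi_T$. At period $t$ the AI prior $\pi_t$ is a distribution on $\Theta$. A user of type $\theta$ uses a signal level $\sigma\in[0,\infty]$; the AI observes $s=\theta+\varepsilon$, $\varepsilon\sim N(0,\sigma^2)$, forms the Bayesian posterior $\pi_t(\cdot\mid s)$ (Gaussian likelihood; the prior itself if $\sigma=\infty$), and outputs $\theta_{A,t}(s,\sigma)\in\arg\min_{\hat\theta\in\Theta}\sum_{\vartheta\in\Theta}(\hat\theta-\vartheta)^2\pi_t(\vartheta\mid s)$. With $\Gamma=\infty$ every user uses the AI, so the output is $\theta^\star_t=\theta_{A,t}(s,\sigma_t(\theta))$ with $s\sim N(\theta,\sigma_t(\theta)^2)$, and the next prior is $\pi_{t+1}(\vartheta)=\mathbb P(\theta^\star_t=\vartheta)$ with $\theta\sim\pi_T$. *)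

From HB Require Import structures.
From mathcomp Require Import all_boot all_order all_algebra.
From mathcomp Require Import all_classical all_reals all_analysis.
Set Implicit Arguments. Unset Strict Implicit. Unset Printing Implicit Defensive.
Import Order.TTheory GRing.Theory Num.Theory.
Local Open Scope classical_set_scope.
Local Open Scope ring_scope.

Inductive pt := Neg | Zero | Pos.

Definition pt_eqb (x y : pt) : bool :=
  match x, y with Neg, Neg | Zero, Zero | Pos, Pos => true | _, _ => false end.

Definition pt_enum : seq pt := [:: Neg; Zero; Pos].

Section Model.
Variable R : realType.
Variable thb : R.

Definition pval (x : pt) : R :=
  match x with Neg => - thb | Zero => 0 | Pos => thb end.

(* A distribution on Theta is a weight function pt -> R. *)
Definition sym_prior (p : R) (x : pt) : R :=
  match x with Zero => p | _ => (1 - p) / 2 end.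

(* Signal level in (0, oo] : [Some s] is a finite level s, [None] is oo. *)
Definition siglevel := option R.

Definition posterior (pri : pt -> R) (sig : siglevel) (s : R) (x : pt) : R :=
  match sig with
  | None => pri x
  | Some sg =>
      pri x * normal_pdf (pval x) sg s /
      \sum_(y <- pt_enum) pri y * normal_pdf (pval y) sg s
  end.

Definition risk (post : pt -> R) (h : pt) : R :=
  \sum_(y <- pt_enum) (pval h - pval y) ^+ 2 * post y.

(* AI output: a minimiser of the posterior risk over Theta.
   Tie-breaking convention (ties have probability zero): prefer 0, then -thb. *)
Definition argmin_out (post : pt -> R) : pt :=
  if (risk post Zero <= risk post Neg) && (risk post Zero <= risk post Pos)
  then Zero
  else if risk post Neg <= risk post Pos then Neg else Pos.

Definition ai_output (pri : pt -> R) (sig : siglevel) (s : R) : pt :=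
  argmin_out (posterior pri sig s).

Definition out_prob (pri : pt -> R) (sig : siglevel) (theta v : pt) : \bar R :=
  match sig with
  | None => (if pt_eqb (ai_output pri None 0) v then 1 else 0)%:E
  | Some sg => normal_prob (pval theta) sg [set s | ai_output pri sig s = v]
  end.

(* Next-period prior (Gamma = oo): pi_{t+1}(v) = P(theta*_t = v), theta ~ piT. *)
Definition next_prior (piT pit : pt -> R) (sigt : pt -> siglevel) (v : pt)
  : \bar R :=
  (\sum_(th <- pt_enum) (piT th)%:E * out_prob pit (sigt th) th v)%E.

Definition sig_profile (sg : R) (x : pt) : siglevel :=
  match x with Zero => None | _ => Some sg end.

Definition p_next (p0 pt0 sg : R) : \bar R :=
  next_prior (sym_prior p0) (sym_prior pt0) (sig_profile sg) Zero.

End Model.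

From HB Require Import structures.
From mathcomp Require Import all_boot all_order all_algebra.
From mathcomp Require Import all_classical all_reals all_analysis.
From mathcomp Require Import ring lra.
Import Order.TTheory GRing.Theory Num.Theory.
Import numFieldNormedType.Exports.
Local Open Scope classical_set_scope.
Local Open Scope ring_scope.

(* With a symmetric prior of mass p at 0, the posterior weights of -thb, 0, thb
   after the signal s are proportional to e^-y, r, e^y, where y = s thb / sg^2,
   b = thb / sg and r = (p / ((1 - p) / 2)) e^(b^2/2).  Minimising the
   posterior squared loss, the AI outputs 0 exactly when |y| <= ln u, u being
   the positive root of t^2 - r t - 3; in standard units the window is
   [-a, a] with a = (ln u) / b, so a user of type +-thb gets output 0 with
   probability Phi (a -+ b) - Phi (- a -+ b).  (1) r, hence u and a, increase
   with p.  (2) Everything depends on sg only through b, and since a b = ln u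
   the b-derivative of each of these probabilities is
   phi (a + b) ((u^2 + 1) a' - (u^2 - 1)), with a' = r / S - a / b and
   S = sqrt (r^2 + 12); the identity u^2 (1 - r / S) = 3 (1 + r / S) turns
   this into - phi (a + b) ((u^2 + 1) a / b + 2 (1 + r / S)) < 0. *)

Section derivative_monotone.
Context {R : realType}.
Variables (f df : R -> R) (a b : R).
Hypothesis f_df : forall x, a <= x <= b -> is_derive x 1 f (df x).

Let f_df_oo x : x \in `]a, b[ -> is_derive x 1 f (df x).
Proof. by rewrite in_itv/= => /andP[ax xb]; apply: f_df; rewrite !ltW. Qed.

Let f_derivable_oo x : x \in `]a, b[ -> derivable f x 1.
Proof. by move=> /f_df_oo []. Qed.

Let f_cont : {within `[a, b], continuous f}.
Proof. by apply: derivable_within_continuous => x /f_df []. Qed.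

Let derive1_oo x : x \in `]a, b[ -> (f^`())%classic x = df x.
Proof.
by move=> xab; rewrite derive1E (@derive_val _ _ _ _ _ _ _ (f_df_oo x xab)).
Qed.

Lemma is_derive_gt0_lt :
  (forall x, a < x < b -> 0 < df x) -> a < b -> f a < f b.
Proof.
move=> df_gt0 ab.
apply: (@gtr0_derive1_lt_cc _ f a b f_derivable_oo) => //;
  rewrite ?in_itv/= ?lexx ?ltW//.
by move=> x xab; rewrite derive1_oo// df_gt0 -?in_itv.
Qed.

Lemma is_derive_lt0_gt :
  (forall x, a < x < b -> df x < 0) -> a < b -> f b < f a.
Proof.
move=> df_lt0 ab.
apply: (@ltr0_derive1_lt_cc _ f a b f_derivable_oo) => //;
  rewrite ?in_itv/= ?lexx ?ltW//.
by move=> x xab; rewrite derive1_oo// df_lt0 -?in_itv.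
Qed.

End derivative_monotone.

Section standard_normal.
Context {R : realType}.

Definition phi (z : R) : R := normal_pdf 0 1 z.

Definition Phi (z : R) : R :=
  Rintegral lebesgue_measure [set` Interval -oo%O (BRight z)] phi.

Lemma phi_gt0 (z : R) : 0 < phi z.
Proof.
rewrite /phi /normal_pdf oner_eq0 mulr_gt0 ?normal_peak_gt0 ?oner_eq0//.
exact: expR_gt0.
Qed.

Lemma phiN (z : R) : phi (- z) = phi z.
Proof. by rewrite /phi /normal_pdf oner_eq0 /normal_fun !subr0 sqrrN. Qed.

Lemma phi_subE (a b : R) : phi (a - b) = phi (a + b) * expR (a * b) ^+ 2.
Proof.
rewrite /phi /normal_pdf oner_eq0 /normal_fun -mulrA -expRM_natl -expRD.
by congr (_ * expR _); rewrite !subr0; field.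
Qed.

Lemma normal_pdfE_phi (m sg x : R) : 0 < sg ->
  normal_pdf m sg x = phi ((x - m) / sg) / sg.
Proof.
move=> sg_gt0; rewrite /phi /normal_pdf oner_eq0 gt_eqF// mulrAC.
congr (_ * _).
  rewrite /normal_peak expr1n mul1r -invfM -mulrnAr sqrtrM ?sqr_ge0//.
  by rewrite sqrtr_sqr gtr0_norm// mulrC.
by rewrite /normal_fun subr0 expr1n; congr expR; field; rewrite gt_eqF.
Qed.

Lemma is_derive_Phi (z : R) : is_derive z 1 Phi (phi z).
Proof.
have [] := @continuous_FTC1 R phi -oo%O z (z + 1) _ _ _ _.
- by rewrite ltrDl.
- by apply: integrableS (integrable_normal_pdf 0 1) => //; exact: subsetT.
- by rewrite ltNyr.
- exact: (@continuous_normal_pdf R 0 1 (oner_neq0 R)).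
by move=> Phi_derivable Phi'; apply: DeriveDef => //; rewrite -derive1E Phi'.
Qed.

Lemma Phi_lt : {homo Phi : x y / x < y}.
Proof.
move=> x y; apply: (@is_derive_gt0_lt _ _ phi) => [z _|z _].
  exact: is_derive_Phi.
exact: phi_gt0.
Qed.

Lemma normal_prob_itv (m sg a b : R) : 0 < sg -> a < b ->
  normal_prob m sg `[a, b] = (Phi ((b - m) / sg) - Phi ((a - m) / sg))%:E.
Proof.
move=> sg_gt0 ab.
have cdf' (x : R) :
    is_derive x 1 (Phi \o (fun y => (y - m) / sg)) (normal_pdf m sg x).
  rewrite normal_pdfE_phi//; apply: is_derive1_comp; first exact: is_derive_Phi.
  by apply: is_derive_eq; rewrite scaler0 add0r subr0 /GRing.scale/= mulr1.
rewrite /normal_prob (@continuous_FTC2 R _ (Phi \o (fun y => (y - m) / sg)))//.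
- by apply: continuous_subspaceT; apply: continuous_normal_pdf; rewrite gt_eqF.
- split; first by move=> x _; have [] := cdf' x.
  + by apply: cvg_at_right_filter; apply: differentiable_continuous;
      apply/derivable1_diffP; have [] := cdf' a.
  + by apply: cvg_at_left_filter; apply: differentiable_continuous;
      apply/derivable1_diffP; have [] := cdf' b.
- by move=> x _; rewrite derive1E (@derive_val _ _ _ _ _ _ _ (cdf' x)).
Qed.

End standard_normal.

Section symmetric_interval.
Context {R : realType}.

Definition sym_itv_prob (a m : R) : R := Phi (a - m) - Phi (- a - m).

Lemma sym_itv_prob_lt (m : R) : {homo sym_itv_prob^~ m : a a' / a < a'}.
Proof.
move=> a a' aa'; rewrite /sym_itv_prob.
have := @Phi_lt R (a - m) (a' - m); have := @Phi_lt R (- a' - m) (- a - m).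
lra.
Qed.

Lemma is_derive_sym_itv_prob {f g : R -> R} {x df dg : R} :
  is_derive x 1 f df -> is_derive x 1 g dg ->
  is_derive x 1 (fun y => sym_itv_prob (f y) (g y))
    (phi (f x - g x) * (df - dg) + phi (f x + g x) * (df + dg)).
Proof.
move=> f' g'.
have := @is_derive1_comp R Phi (fun y => f y - g y) x _ _ (is_derive_Phi _) _.
have := @is_derive1_comp R Phi (fun y => - f y - g y) x _ _ (is_derive_Phi _) _.
move=> dPhi2 dPhi1; rewrite /sym_itv_prob; apply: is_derive_eq.
by rewrite -opprD phiN -opprD mulrN opprK.
Qed.

End symmetric_interval.

Section quadratic_root.
Context {R : rcfType}.

Definition quad_disc (r : R) : R := Num.sqrt (r ^+ 2 + 12).

Definition quad_root (r : R) : R := (r + quad_disc r) / 2.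

Lemma quad_discE (r : R) : quad_disc r ^+ 2 = r ^+ 2 + 12.
Proof. by rewrite sqr_sqrtr// addr_ge0 ?sqr_ge0. Qed.

Lemma quad_disc_gt_norm (r : R) : `|r| < quad_disc r.
Proof.
rewrite -sqrtr_sqr /quad_disc ltr_sqrt ?ltrDl//.
by rewrite ltr_wpDl ?sqr_ge0.
Qed.

Lemma quad_disc_gt0 (r : R) : 0 < quad_disc r.
Proof. exact: le_lt_trans (quad_disc_gt_norm r). Qed.

Lemma quad_root_factor (r t : R) :
  t ^+ 2 - r * t - 3 = (t - quad_root r) * (t - (r - quad_disc r) / 2).
Proof.
have SE := quad_discE r; rewrite /quad_root; set S := quad_disc r in SE *.
have -> : (3 : R) = (S ^+ 2 - r ^+ 2) / 4 by rewrite SE; field.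
by field.
Qed.

Lemma quad_rootE (r : R) : quad_root r ^+ 2 = r * quad_root r + 3.
Proof.
have := quad_root_factor r (quad_root r); rewrite subrr mul0r => /eqP.
by rewrite subr_eq0 subr_eq addrC => /eqP.
Qed.

Lemma quad_lt_root (r t : R) : 0 < t ->
  (t ^+ 2 - r * t - 3 < 0) = (t < quad_root r).
Proof.
move=> t_gt0; have := quad_disc_gt_norm r; rewrite ltr_norml => /andP[_ rS].
by rewrite quad_root_factor pmulr_llt0 ?subr_lt0// subr_gt0; lra.
Qed.

Lemma quad_le_root (r t : R) : 0 < t ->
  (t ^+ 2 - r * t - 3 <= 0) = (t <= quad_root r).
Proof.
move=> t_gt0; have := quad_disc_gt_norm r; rewrite ltr_norml => /andP[_ rS].
by rewrite quad_root_factor pmulr_lle0 ?subr_le0// subr_gt0; lra.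
Qed.

Lemma quad_root_gt0 (r : R) : 0 < quad_root r.
Proof. by have := quad_disc_gt_norm r; rewrite ltr_norml /quad_root; lra. Qed.

Lemma quad_root_gt1 (r : R) : -2 < r -> 1 < quad_root r.
Proof. by move=> r_gt; rewrite -quad_lt_root//; lra. Qed.

Lemma quad_root_lt : {homo quad_root : r r' / r < r'}.
Proof.
move=> r r' rr'; rewrite -quad_lt_root ?quad_root_gt0//.
have := quad_root_gt0 r; rewrite quad_rootE; nra.
Qed.

Lemma quad_root_sqrM (r : R) :
  quad_root r ^+ 2 * (1 - r / quad_disc r) = 3 * (1 + r / quad_disc r).
Proof.
have S_neq0 : quad_disc r != 0 by rewrite gt_eqF ?quad_disc_gt0.
have SE := quad_discE r.
rewrite /quad_root; set S := quad_disc r in SE S_neq0 *.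
have -> : (3 : R) = (S ^+ 2 - r ^+ 2) / 4 by rewrite SE; field.
by field.
Qed.

End quadratic_root.

Section quadratic_root_real.
Context {R : realType}.

Lemma is_derive_quad_root (r : R) :
  is_derive r 1 quad_root (quad_root r / quad_disc r).
Proof.
have disc_gt0 : 0 < r ^+ 2 + 12 by rewrite ltr_wpDl ?sqr_ge0.
have dsq : is_derive r 1 (fun x : R => x ^+ 2 + 12) (r *+ 2).
  by apply: is_derive_eq; rewrite addr0 /GRing.scale/= mulr1 mulr2n.
have dS : is_derive r 1 (fun x => Num.sqrt (x ^+ 2 + 12))
    ((2 * Num.sqrt (r ^+ 2 + 12))^-1 * r *+ 2).
  rewrite -mulrnAr.
  exact: (@is_derive1_comp R Num.sqrt _ r _ _ (is_derive1_sqrt disc_gt0) dsq).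
rewrite /quad_root; apply: is_derive_eq; rewrite -/(quad_disc r).
rewrite !scaler0 add0r /GRing.scale/= mulr2n.
by field; rewrite gt_eqF ?quad_disc_gt0.
Qed.

Lemma expR_quad_le (r y : R) :
  (expR (- y) - r - 3 * expR y <= 0) = (- y <= ln (quad_root r)).
Proof.
have -> : expR (- y) - r - 3 * expR y =
    expR y * (expR (- y) ^+ 2 - r * expR (- y) - 3).
  by rewrite expRN; field; rewrite gt_eqF ?expR_gt0.
rewrite pmulr_rle0 ?expR_gt0// quad_le_root ?expR_gt0//.
by rewrite -[X in _ = X]ler_expR lnK// posrE quad_root_gt0.
Qed.

End quadratic_root_real.

Section zero_cutoff.
Context {R : realType}.

Definition prior_odds (p : R) : R := p / ((1 - p) / 2).

Definition zero_odds (c b : R) : R := c * expR (b ^+ 2 / 2).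

Definition zero_cutoff (c b : R) : R := ln (quad_root (zero_odds c b)) / b.

Lemma zero_odds_ge0 (c b : R) : 0 <= c -> 0 <= zero_odds c b.
Proof. by move=> c_ge0; rewrite mulr_ge0 ?expR_ge0. Qed.

Lemma zero_cutoff_gt0 (c b : R) : 0 <= c -> 0 < b -> 0 < zero_cutoff c b.
Proof.
move=> c_ge0 b_gt0; rewrite divr_gt0// ln_gt0// quad_root_gt1//.
by have := zero_odds_ge0 c b c_ge0; lra.
Qed.

Definition zero_mass (c b : R) : R :=
  sym_itv_prob (zero_cutoff c b) (- b) + sym_itv_prob (zero_cutoff c b) b.

End zero_cutoff.

Section bayes_decision.
Context {R : realType}.
Variable thb : R.
Hypothesis thb_gt0 : 0 < thb.

Lemma argmin_out_ZeroP (post : pt -> R) :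
  argmin_out thb post = Zero <->
  (post Neg - post Zero - 3 * post Pos <= 0) &&
  (post Pos - post Zero - 3 * post Neg <= 0).
Proof.
have thb2_gt0 : 0 < thb ^+ 2 by rewrite exprn_gt0.
have riskE (h : pt) (d : R) :
    risk thb post Zero - risk thb post h = thb ^+ 2 * d ->
    (risk thb post Zero <= risk thb post h) = (d <= 0).
  by move=> dE; rewrite -subr_le0 dE pmulr_rle0.
rewrite /argmin_out (riskE Neg (post Neg - post Zero - 3 * post Pos));
  last by rewrite /risk /pt_enum !big_cons !big_nil /=; ring.
rewrite (riskE Pos (post Pos - post Zero - 3 * post Neg));
  last by rewrite /risk /pt_enum !big_cons !big_nil /=; ring.
by case: ifP => _; split=> //; case: ifP.
Qed.

Lemma argmin_out_sym_prior (p : R) : argmin_out thb (sym_prior p) = Zero.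
Proof. by apply/argmin_out_ZeroP; rewrite /=; apply/andP; split; lra. Qed.

Definition sym_weight (r y : R) (x : pt) : R :=
  match x with Neg => expR (- y) | Zero => r | Pos => expR y end.

Lemma argmin_out_sym_weight (r y Z : R) : 0 < Z ->
  argmin_out thb (fun x => sym_weight r y x / Z) = Zero <->
  `|y| <= ln (quad_root r).
Proof.
move=> Z_gt0; rewrite argmin_out_ZeroP /= !mulrA.
rewrite -!mulrBl !pmulr_lle0 ?invr_gt0// expR_quad_le.
by rewrite -[in expR y - _](opprK y) expR_quad_le ler_norml lerNl opprK.
Qed.

Lemma posterior_sym (p sg s : R) : p < 1 -> 0 < sg ->
  let w := sym_weight (zero_odds (prior_odds p) (thb / sg))
    (s * thb / sg ^+ 2) in
  posterior thb (sym_prior p) (Some sg) s =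
  fun x => w x / \sum_(x' <- pt_enum) w x'.
Proof.
move=> p_lt1 sg_gt0 w.
have sg_neq0 : sg != 0 by rewrite gt_eqF.
set E := - (s ^+ 2 + thb ^+ 2) / (sg ^+ 2 *+ 2).
set K := (1 - p) / 2 * normal_peak sg * expR E.
have K_neq0 : K != 0.
  by rewrite gt_eqF// !mulr_gt0 ?expR_gt0 ?normal_peak_gt0//; lra.
have normal_funE (m e : R) : - (s - m) ^+ 2 / (sg ^+ 2 *+ 2) = E + e ->
    normal_fun m sg s = expR E * expR e.
  by rewrite /normal_fun => ->; rewrite expRD.
have lik x : sym_prior p x * normal_pdf (pval thb x) sg s = K * w x.
  rewrite /normal_pdf (negbTE sg_neq0) /K /w /=.
  case: x => /=; [rewrite (normal_funE _ (- (s * thb / sg ^+ 2)))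
    |rewrite (normal_funE _ ((thb / sg) ^+ 2 / 2))
    |rewrite (normal_funE _ (s * thb / sg ^+ 2))];
    rewrite /E /zero_odds /prior_odds; field; rewrite ?sg_neq0//; lra.
apply/funext => x; rewrite /posterior lik (eq_bigr _ (fun x' _ => lik x')).
by rewrite -big_distrr -mulf_div divff// mul1r.
Qed.

Lemma ai_output_sym_Zero (p sg : R) : 0 <= p < 1 -> 0 < sg ->
  let a := zero_cutoff (prior_odds p) (thb / sg) in
  [set s | ai_output thb (sym_prior p) (Some sg) s = Zero] =
  [set` `[- (sg * a), sg * a]].
Proof.
move=> /andP[p_ge0 p_lt1] sg_gt0 a.
have odds_ge0 : 0 <= zero_odds (prior_odds p) (thb / sg).
  by rewrite zero_odds_ge0// divr_ge0//; lra.
set r := zero_odds _ _ in odds_ge0 a *.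
have weights_gt0 (y : R) : 0 < \sum_(x <- pt_enum) sym_weight r y x.
  rewrite /pt_enum !big_cons big_nil /=.
  by have := expR_gt0 y; have := expR_gt0 (- y); lra.
have cutoffE (s : R) :
    (`|s * thb / sg ^+ 2| <= ln (quad_root r)) = (`|s| <= sg * a).
  have c_gt0 : 0 < thb / sg ^+ 2 by rewrite divr_gt0 ?exprn_gt0.
  rewrite -mulrA normrM (gtr0_norm c_gt0) -ler_pdivlMr//.
  by congr (_ <= _); rewrite /a /zero_cutoff -/r; field; rewrite !gt_eqF.
suff sE s : ai_output thb (sym_prior p) (Some sg) s = Zero <-> `|s| <= sg * a.
  by apply/seteqP; split => s /=; rewrite in_itv/= -ler_norml => /sE.
by rewrite /ai_output posterior_sym// argmin_out_sym_weight// cutoffE.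
Qed.

Lemma p_next_sym (p0 p sg : R) : 0 <= p < 1 -> 0 < sg ->
  p_next thb p0 p sg =
  (p0 + (1 - p0) / 2 * zero_mass (prior_odds p) (thb / sg))%:E.
Proof.
move=> p_itv sg_gt0; have /andP[p_ge0 p_lt1] := p_itv.
have a_gt0 : 0 < zero_cutoff (prior_odds p) (thb / sg).
  by rewrite zero_cutoff_gt0 ?divr_ge0 ?divr_gt0//; lra.
have zero_prob m : normal_prob m sg
    [set s | ai_output thb (sym_prior p) (Some sg) s = Zero] =
    (sym_itv_prob (zero_cutoff (prior_odds p) (thb / sg)) (m / sg))%:E.
  rewrite ai_output_sym_Zero// normal_prob_itv//; last first.
    by rewrite gtrN// mulr_gt0.
  by congr (Phi _ - Phi _)%:E; field; rewrite gt_eqF.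
rewrite /p_next /next_prior /pt_enum !big_cons big_nil /= !zero_prob mulNr.
have -> : ai_output thb (sym_prior p) None 0 = Zero := argmin_out_sym_prior p.
by rewrite mule1 adde0 -!EFinM -!EFinD /zero_mass; congr EFin; ring.
Qed.

End bayes_decision.

Section zero_mass_monotone.
Context {R : realType}.

Lemma prior_odds_lt (p p' : R) : p < p' -> p' < 1 ->
  prior_odds p < prior_odds p'.
Proof.
move=> pp' p'_lt1; rewrite /prior_odds ltr_pdivrMr ?divr_gt0//; last by lra.
by rewrite mulrAC ltr_pdivlMr; [nra|lra].
Qed.

Lemma zero_cutoff_lt (b c c' : R) : 0 < b -> c < c' ->
  zero_cutoff c b < zero_cutoff c' b.
Proof.
move=> b_gt0 cc'; rewrite ltr_pM2r ?invr_gt0// ltr_ln ?posrE ?quad_root_gt0//.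
by apply: quad_root_lt; rewrite ltr_pM2r ?expR_gt0.
Qed.

Lemma zero_mass_lt_odds (b c c' : R) : 0 < b -> c < c' ->
  zero_mass c b < zero_mass c' b.
Proof.
move=> b_gt0 cc'; have a_lt := zero_cutoff_lt b c c' b_gt0 cc'.
by rewrite /zero_mass ltrD// sym_itv_prob_lt.
Qed.

Definition zero_cutoff_slope (c b : R) : R :=
  zero_odds c b / quad_disc (zero_odds c b) - zero_cutoff c b / b.

Lemma is_derive_zero_cutoff (c b : R) : 0 < b ->
  is_derive b 1 (zero_cutoff c) (zero_cutoff_slope c b).
Proof.
move=> b_gt0; set r := zero_odds c b.
have d_half_sqr : is_derive b 1 (fun x : R => x ^+ 2 / 2) b.
  by apply: is_derive_eq; rewrite !scaler0 add0r /GRing.scale/= mulr1; field.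
have d_odds : is_derive b 1 (zero_odds c) (r * b).
  have := @is_derive1_comp R expR _ b _ _ (is_derive_expR _) d_half_sqr.
  move=> d_exp; rewrite /r /zero_odds; apply: is_derive_eq.
  by rewrite /GRing.scale/= mulrA.
have d_root :=
  @is_derive1_comp R quad_root _ b _ _ (is_derive_quad_root _) d_odds.
have d_ln := @is_derive1_comp R (@ln R) (quad_root \o zero_odds c) b _ _
  (is_derive1_ln (quad_root_gt0 _)) d_root.
have d_inv := @is_deriveV R id b 1 1 (lt0r_neq0 b_gt0) (is_derive_id b 1).
rewrite /zero_cutoff; apply: is_derive_eq; rewrite /GRing.scale/= mulr1.
rewrite /zero_cutoff_slope /zero_cutoff -/r.
by field; rewrite !gt_eqF ?quad_disc_gt0 ?quad_root_gt0.
Qed.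

Lemma zero_mass_slope_lt0 (c b : R) : 0 <= c -> 0 < b ->
  phi (zero_cutoff c b - b) * (zero_cutoff_slope c b - 1) +
  phi (zero_cutoff c b + b) * (zero_cutoff_slope c b + 1) < 0.
Proof.
move=> c_ge0 b_gt0; rewrite /zero_cutoff_slope.
set a := zero_cutoff c b; set r := zero_odds c b.
have a_gt0 : 0 < a := zero_cutoff_gt0 c b c_ge0 b_gt0.
have W_ge0 : 0 <= r / quad_disc r.
  by apply: divr_ge0; [exact: zero_odds_ge0 | exact: ltW (quad_disc_gt0 _)].
have expR_ab : expR (a * b) = quad_root r.
  by rewrite /a /zero_cutoff divfK ?gt_eqF// lnK// posrE quad_root_gt0.
rewrite phi_subE expR_ab.
set u := quad_root r; set W := r / quad_disc r in W_ge0 *.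
have ab_gt0 : 0 < (u ^+ 2 + 1) * (a / b).
  by apply: mulr_gt0; [exact: ltr_wpDl (sqr_ge0 _) ltr01 | exact: divr_gt0].
have -> : phi (a + b) * u ^+ 2 * (W - a / b - 1) +
    phi (a + b) * (W - a / b + 1) =
    phi (a + b) * (- ((u ^+ 2 + 1) * (a / b)) - u ^+ 2 * (1 - W) + (1 + W)).
  by ring.
by rewrite quad_root_sqrM -/W pmulr_rlt0 ?phi_gt0//; lra.
Qed.

Lemma zero_mass_gt (c b b' : R) : 0 <= c -> 0 < b -> b < b' ->
  zero_mass c b' < zero_mass c b.
Proof.
move=> c_ge0 b_gt0 bb'.
pose slope x := phi (zero_cutoff c x - x) * (zero_cutoff_slope c x - 1) +
  phi (zero_cutoff c x + x) * (zero_cutoff_slope c x + 1).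
apply: (@is_derive_lt0_gt _ (zero_mass c) (fun x => slope x *+ 2)) => // x.
  move=> /andP[bx _]; have x_gt0 : 0 < x by exact: lt_le_trans bx.
  have d_cut := is_derive_zero_cutoff c x x_gt0.
  have d_opp : is_derive x 1 (fun y : R => - y) (- 1) by apply: is_derive_eq.
  have := is_derive_sym_itv_prob d_cut d_opp.
  have := is_derive_sym_itv_prob d_cut (is_derive_id x 1).
  move=> d_pos d_neg; rewrite /zero_mass; apply: is_derive_eq.
  by rewrite /slope !opprK; ring.
move=> /andP[bx _]; have x_gt0 : 0 < x by exact: lt_trans bx.
by have := zero_mass_slope_lt0 c x c_ge0 x_gt0; rewrite mulr2n /slope; lra.
Qed.

End zero_mass_monotone.

Theorem mainTheorem16 (R : realType) (thb p0 : R)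
  (hthb : 0 < thb) (hp0 : 0 < p0 < 1) :
  (* (1) strictly increasing in p_t, for fixed sigma in (0,oo) *)
  (forall sg pt pt' : R, 0 < sg -> 0 <= pt -> pt < pt' -> pt' < 1 ->
     (p_next thb p0 pt sg < p_next thb p0 pt' sg)%E) /\
  (* (2) strictly increasing in sigma, for fixed p_t in [0,1) *)
  (forall pt sg sg' : R, 0 <= pt < 1 -> 0 < sg -> sg < sg' ->
     (p_next thb p0 pt sg < p_next thb p0 pt sg')%E).
Proof.
have q0_gt0 : 0 < (1 - p0) / 2 by case/andP: hp0 => _ ?; lra.
split=> [sg p p' sg_gt0 p_ge0 pp' p'_lt1 | p sg sg' p_itv sg_gt0 sgsg'].
- rewrite !p_next_sym//; last 2 first.
  + by apply/andP; split; lra.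
  + by apply/andP; split; lra.
  rewrite lte_fin ltrD2l ltr_pM2l// zero_mass_lt_odds ?divr_gt0//.
  exact: prior_odds_lt.
- have sg'_gt0 : 0 < sg' by exact: lt_trans sgsg'.
  rewrite !p_next_sym// lte_fin ltrD2l ltr_pM2l//.
  apply: zero_mass_gt; last by rewrite ltr_pM2l ?ltf_pV2.
  + by case/andP: p_itv => ? ?; rewrite divr_ge0//; lra.
  + exact: divr_gt0.
Qed.
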